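(* For any trace-free statistical structure $(g,\nabla)$ on $M$ and any $g$-orthonormal frame $e_1,\dots,e_n$ at a point, $$\sum_{i,j=1}^n\nabla^2g(e_i,e_i,e_j,e_j)=g(\nabla g,\nabla g).$$
   Context: A statistical structure is a pair $(g,\nabla)$, $g$ a positive definite Riemannian metric, $\nabla$ torsion-free with $(\nabla_X g)(Y,Z)=(\nabla_Y g)(X,Z)$; it is trace-free if $\nabla\nu_g=0$ ($\nu_g$ the Riemannian volume form). Here $\nabla g(X,Y,Z)=(\nabla_Xg)(Y,Z)$, $\nabla^2g(X,Y,Z,W)=(\nabla_X(\nabla g))(Y,Z,W)$, and $g(\nabla g,\nabla g)=\sum_{i,j,k}\nabla g(e_i,e_j,e_k)^2$. *)

(* Local-coordinate formulation of statistical
   structures on an open subset U of R^n (points are row vectors 'rV[R]_n). *)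
From HB Require Import structures.
From mathcomp Require Import all_boot all_order all_algebra.
From mathcomp Require Import all_classical all_reals all_analysis.
Set Implicit Arguments. Unset Strict Implicit. Unset Printing Implicit Defensive.
Import Order.TTheory GRing.Theory Num.Theory.
Import numFieldNormedType.Exports.
Local Open Scope ring_scope.

Section StatDefs.
Variables (R : realType) (n : nat).

Definition ebasis (a : 'I_n) : 'rV[R]_n := delta_mx 0 a.

Definition pd (f : 'rV[R]_n -> R) (a : 'I_n) (x : 'rV[R]_n) : R :=
  derive f x (ebasis a).

(* Metric components g_{ij}(x) : G i j x.
   Connection coefficients: nabla_{d_i} d_j = sum_k Gam k i j * d_k. *)
Definition metric_at (G : 'I_n -> 'I_n -> 'rV[R]_n -> R) (x : 'rV[R]_n)
  : 'M[R]_n := \matrix_(i, j) G i j x.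

Definition gform (G : 'I_n -> 'I_n -> 'rV[R]_n -> R) x (v w : 'rV[R]_n) : R := (v *m metric_at G x *m w^T) 0 0.

Definition nablag (G : 'I_n -> 'I_n -> 'rV[R]_n -> R)
  (Gam : 'I_n -> 'I_n -> 'I_n -> 'rV[R]_n -> R) (a b c : 'I_n) (x : 'rV[R]_n) : R :=
  pd (G b c) a x - \sum_k Gam k a b x * G k c x - \sum_k Gam k a c x * G b k x.

Definition nabla2g (G : 'I_n -> 'I_n -> 'rV[R]_n -> R)
  (Gam : 'I_n -> 'I_n -> 'I_n -> 'rV[R]_n -> R) (m a b c : 'I_n) (x : 'rV[R]_n) : R :=
  pd (nablag G Gam a b c) m x
  - \sum_k Gam k m a x * nablag G Gam k b c x
  - \sum_k Gam k m b x * nablag G Gam a k c x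
  - \sum_k Gam k m c x * nablag G Gam a b k x.

Definition nablag_ev (G : 'I_n -> 'I_n -> 'rV[R]_n -> R)
  (Gam : 'I_n -> 'I_n -> 'I_n -> 'rV[R]_n -> R) x (X Y Z : 'rV[R]_n) : R :=
  \sum_a \sum_b \sum_c X 0 a * Y 0 b * Z 0 c * nablag G Gam a b c x.

Definition nabla2g_ev (G : 'I_n -> 'I_n -> 'rV[R]_n -> R)
  (Gam : 'I_n -> 'I_n -> 'I_n -> 'rV[R]_n -> R) x (X Y Z W : 'rV[R]_n) : R :=
  \sum_m \sum_a \sum_b \sum_c
    X 0 m * Y 0 a * Z 0 b * W 0 c * nabla2g G Gam m a b c x.

(* coefficient of the Riemannian volume form: nu_g = volc * dx^1 /\ ... /\ dx^n *)
Definition volc (G : 'I_n -> 'I_n -> 'rV[R]_n -> R) (x : 'rV[R]_n) : R := Num.sqrt (\det (metric_at G x)).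

(* (nabla_{d_a} nu_g)(d_1,...,d_n)
   = d_a (nu_g(d_1..d_n)) - sum_i nu_g(d_1,..,nabla_{d_a} d_i,..,d_n) *)
Definition nabla_vol (G : 'I_n -> 'I_n -> 'rV[R]_n -> R)
  (Gam : 'I_n -> 'I_n -> 'I_n -> 'rV[R]_n -> R) (a : 'I_n) (x : 'rV[R]_n) : R :=
  pd (volc G) a x - (\sum_i Gam i a i x) * volc G x.

Definition statistical_structure (U : set 'rV[R]_n) (G : 'I_n -> 'I_n -> 'rV[R]_n -> R)
  (Gam : 'I_n -> 'I_n -> 'I_n -> 'rV[R]_n -> R) : Prop :=
  [/\ (forall x, U x -> forall i j, G i j x = G j i x),
      (forall x, U x -> forall v : 'rV[R]_n, v != 0 -> 0 < gform G x v v),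
      (forall x, U x -> forall k i j, Gam k i j x = Gam k j i x) &
      (forall x, U x -> forall a b c, nablag G Gam a b c x = nablag G Gam b a c x)].

Definition trace_free (U : set 'rV[R]_n) (G : 'I_n -> 'I_n -> 'rV[R]_n -> R)
  (Gam : 'I_n -> 'I_n -> 'I_n -> 'rV[R]_n -> R) : Prop :=
  forall x, U x -> forall a, nabla_vol G Gam a x = 0.

(* differentiability assumed (implied by smoothness) *)
Definition regular (U : set 'rV[R]_n) (G : 'I_n -> 'I_n -> 'rV[R]_n -> R)
  (Gam : 'I_n -> 'I_n -> 'I_n -> 'rV[R]_n -> R) : Prop :=
  [/\ (forall x, U x -> forall a i j, derivable (G i j) x (ebasis a)),
      (forall x, U x -> forall a b i j,
          derivable (fun y => pd (G i j) b y) x (ebasis a)) &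
      (forall x, U x -> forall a k i j, derivable (Gam k i j) x (ebasis a))].

Definition orthonormal_frame (G : 'I_n -> 'I_n -> 'rV[R]_n -> R) (x : 'rV[R]_n) (E : 'I_n -> 'rV[R]_n) : Prop :=
  forall i j, gform G x (E i) (E j) = (i == j)%:R.

End StatDefs.

(* Write C_a = (nabla g)(d_a, -, -) as a symmetric matrix and P = g^-1.  By
   Jacobi's formula d_a (det g) = tr (adj g . d_a g), trace-freeness of nabla
   says exactly that tr (C_a P) = 0 on U.  Differentiating this identity in the
   direction d_m and using adj g . g = det g gives
   tr (nabla^2 g (d_m, d_a, -, -) P) = tr (C_m P C_a P).  For an orthonormal
   frame with coordinate matrix F we have F^T F = P, so contracting both sides
   with P^{ma} yields the two sides of the theorem, using the symmetry of C_a on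
   the right. *)
From HB Require Import structures.
From mathcomp Require Import all_boot all_order all_algebra.
From mathcomp Require Import all_classical all_reals all_analysis.
From mathcomp Require Import perm ring lra.
Set Implicit Arguments. Unset Strict Implicit. Unset Printing Implicit Defensive.
Import Order.TTheory GRing.Theory Num.Theory.
Import numFieldNormedType.Exports.
Local Open Scope ring_scope.

Section big_derive.
Context {R : realFieldType} {V : normedModType R}.

Lemma is_derive_big_sum (W : normedModType R) (I : Type) (r : seq I) (P : pred I)
    (f : I -> V -> W) (df : I -> W) x v :
  (forall i, P i -> is_derive x v (f i) (df i)) ->
  is_derive x v (fun y => \sum_(i <- r | P i) f i y) (\sum_(i <- r | P i) df i).
Proof.
move=> dfi; rewrite -fct_sumE.
elim/big_ind2 : _ => // [|f1 d1 f2 d2 ? ?]; [exact: is_derive_cst | exact: is_deriveD].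
Qed.

Lemma derivable_big_sum (I : Type) (r : seq I) (P : pred I) (f : I -> V -> R) x v :
  (forall i, P i -> derivable (f i) x v) ->
  derivable (fun y => \sum_(i <- r | P i) f i y) x v.
Proof.
move=> dfi; have [] // := @is_derive_big_sum R I r P f (fun i => 'D_v (f i) x) x v.
by move=> i Pi; apply: derivableP; exact: dfi.
Qed.

Lemma is_derive_big_prod (I : eqType) (r : seq I) (f : I -> V -> R) (df : I -> R) x v :
  uniq r -> (forall i, is_derive x v (f i) (df i)) ->
  is_derive x v (fun y => \prod_(i <- r) f i y)
    (\sum_(j <- r) \prod_(i <- r) (if i == j then df i else f i x)).
Proof.
move=> + dfi; elim: r => [_|a r IH /andP[ar ur]].
  rewrite big_nil (_ : (fun _ => _) = cst 1); first exact: is_derive_cst.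
  by apply/funext => y; rewrite big_nil.
rewrite (_ : (fun y => _) = f a * (fun y => \prod_(i <- r) f i y)); last first.
  by apply/funext => y; rewrite big_cons.
apply: is_derive_eq; first by apply: is_deriveM; exact: IH.
have prod_off j : j \notin r -> \prod_(i <- r) (if i == j then df i else f i x)
    = \prod_(i <- r) f i x.
  move=> jr; rewrite big_seq [RHS]big_seq; apply: eq_bigr => i ir.
  by case: eqP => // ij; move: jr; rewrite -ij ir.
rewrite big_cons big_cons eqxx prod_off // addrC mulrC; congr (_ + _).
rewrite -[_ *: _]/(_ * _) big_distrr /= big_seq [RHS]big_seq.
apply: eq_bigr => j jr; rewrite big_cons.
by case: eqP => // aj; move: ar; rewrite aj jr.
Qed.

End big_derive.

Section matrix_derive.
Context {R : realFieldType} {V : normedModType R}.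

Lemma is_derive_mxP m n (M : V -> 'M[R]_(m, n)) (dM : 'M[R]_(m, n)) x v :
  is_derive x v M dM <-> forall i j, is_derive x v (fun y => M y i j) (dM i j).
Proof.
split=> [[dMx <-] i j | dMij].
  have /derivable_mxP dMij := dMx.
  by apply: DeriveDef; rewrite ?derive_mx ?mxE.
have dMx : derivable M x v by apply/derivable_mxP => i j; case: (dMij i j).
apply: DeriveDef; rewrite // derive_mx //; apply/matrixP => i j; rewrite mxE.
by case: (dMij i j).
Qed.

Lemma is_derive_mulmx m n p (A : V -> 'M[R]_(m, n)) (B : V -> 'M[R]_(n, p)) dA dB x v :
  is_derive x v A dA -> is_derive x v B dB ->
  is_derive x v (fun y => A y *m B y) (dA *m B x + A x *m dB).
Proof.
move=> /is_derive_mxP dA' /is_derive_mxP dB'; apply/is_derive_mxP => i j.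
rewrite !mxE -big_split /=.
under eq_fun do rewrite mxE.
apply: is_derive_big_sum => k _; apply: is_derive_eq.
rewrite /GRing.scale /= addrC; congr (_ + _); exact: mulrC.
Qed.

Lemma is_derive_mxtrace n (A : V -> 'M[R]_n) dA x v :
  is_derive x v A dA -> is_derive x v (fun y => \tr (A y)) (\tr dA).
Proof. by move=> /is_derive_mxP dA'; apply: is_derive_big_sum => i _. Qed.

Lemma is_derive_scalar_mx n (f : V -> R) df x v : is_derive x v f df ->
  is_derive x v (fun y => (f y)%:M : 'M[R]_n) df%:M.
Proof.
move=> dfx; apply/is_derive_mxP => i j; rewrite mxE.
under eq_fun do rewrite mxE.
by case: (i == j); [exact: dfx | exact: is_derive_cst].
Qed.

Lemma is_derive_det n (M : V -> 'M[R]_n) dM x v : is_derive x v M dM ->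
  is_derive x v (fun y => \det (M y)) (\tr (\adj (M x) *m dM)).
Proof.
move=> /is_derive_mxP dMij.
pose B j : 'M[R]_n := \matrix_(i, l) (if i == j then dM i l else M x i l).
have -> : \tr (\adj (M x) *m dM) = \sum_j \det (B j).
  rewrite /mxtrace; under eq_bigr do rewrite mxE.
  rewrite exchange_big; apply: eq_bigr => j _; rewrite (expand_det_row _ j).
  apply: eq_bigr => l _; rewrite !mxE eqxx mulrC; congr (_ * _).
  rewrite /cofactor; congr (_ * \det _); apply/matrixP => i1 i2.
  by rewrite !mxE eq_sym (negbTE (neq_lift _ _)).
have -> : \sum_j \det (B j) = \sum_(s : 'S_n) (-1) ^+ s *
    \sum_(j <- index_enum 'I_n) \prod_(i <- index_enum 'I_n)
      (if i == j then dM i (s i) else M x i (s i)).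
  under [RHS]eq_bigr do rewrite big_distrr /=.
  rewrite [RHS]exchange_big; apply: eq_bigr => j _; apply: eq_bigr => s _.
  by congr (_ * _); apply: eq_bigr => i _; rewrite mxE.
apply: is_derive_big_sum => s _; apply: is_deriveZ.
by apply: is_derive_big_prod; first exact: index_enum_uniq.
Qed.

Lemma derivable_adj n (M : V -> 'M[R]_n) x v : derivable M x v ->
  derivable (fun y => \adj (M y)) x v.
Proof.
move=> /derivable_mxP dM; apply/derivable_mxP => i j.
under eq_fun do rewrite mxE /cofactor.
apply: derivableZ.
have dminor : is_derive x v (fun y => row' j (col' i (M y)))
    (\matrix_(a, b) 'D_v (fun y => M y (lift j a) (lift i b)) x).
  apply/is_derive_mxP => a b; rewrite mxE; under eq_fun do rewrite !mxE.
  exact: derivableP.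
by case: (is_derive_det dminor).
Qed.

Lemma derive_adj_mulmx n (M : V -> 'M[R]_n) x v : derivable M x v ->
  'D_v (fun y => \adj (M y)) x *m M x + \adj (M x) *m 'D_v M x
  = (\tr (\adj (M x) *m 'D_v M x))%:M.
Proof.
move=> dM.
have [_ <-] := is_derive_mulmx (derivableP (derivable_adj dM)) (derivableP dM).
suff: is_derive x v (fun y => \adj (M y) *m M y) (\tr (\adj (M x) *m 'D_v M x))%:M.
  by case.
under eq_fun do rewrite mul_adj_mx.
exact/is_derive_scalar_mx/is_derive_det/derivableP.
Qed.

End matrix_derive.

Section line_derive.
Context {R : realType} {V : normedModType R}.

Lemma derive_along_line (f : V -> R) x v :
  'D_v f x = 'D_1 (fun h : R => f (h *: v + x)) 0.
Proof.
rewrite /derive; congr (lim (_ @ 0^'))%classic; apply/funext => h /=.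
by rewrite scale0r add0r addr0 [h%:A]mulr1.
Qed.

Lemma derive_sqrt_comp (f : V -> R) x v : 0 < f x -> derivable f x v ->
  'D_v (fun y => Num.sqrt (f y)) x = 'D_v f x / (2 * Num.sqrt (f x)).
Proof.
move=> fx0 df; rewrite !derive_along_line.
have fv0 : (fun h : R => f (h *: v + x)) 0 = f x by rewrite /= scale0r add0r.
have dsqrt : derivable Num.sqrt ((fun h : R => f (h *: v + x)) 0) 1.
  by rewrite fv0; case: (is_derive1_sqrt fx0).
have := derive1_comp ((derivable1P _ _ _).1 df) dsqrt.
by rewrite !derive1E /= => ->; rewrite fv0 derive_sqrt // mulrC.
Qed.

End line_derive.

Section posdef.
Variable R : realType.

Lemma mulmx_trmx_gt0 k (w : 'rV[R]_k) : w != 0 -> 0 < (w *m w^T) 0 0.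
Proof.
move=> w0; rewrite mxE; under eq_bigr do rewrite mxE -expr2.
rewrite lt_neqAle sumr_ge0 ?andbT; last by move=> i _; exact: sqr_ge0.
apply/eqP => /esym/psumr_eq0P w2_0; move/eqP: w0; apply.
apply/matrixP => i j; rewrite mxE (ord1 i).
by apply/eqP; rewrite -sqrf_eq0 w2_0 // => l _; exact: sqr_ge0.
Qed.

Lemma posdef_det_neq0 k (A : 'M[R]_k) :
  (forall w : 'rV[R]_k, w != 0 -> 0 < (w *m A *m w^T) 0 0) -> \det A != 0.
Proof.
move=> Apos; apply/negP => /det0P[w w0 wA].
by have := Apos w w0; rewrite wA mul0mx mxE ltxx.
Qed.

Lemma posdef_det_gt0 k (A : 'M[R]_k) :
  (forall w : 'rV[R]_k, w != 0 -> 0 < (w *m A *m w^T) 0 0) -> 0 < \det A.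
Proof.
move=> Apos.
(* det ((1 - t) + t A) has no zero on [0, 1] and equals 1 at t = 0. *)
pose B t : 'M[R]_k := (1 - t)%:M + t *: A.
have Bdet t : 0 <= t <= 1 -> \det (B t) != 0.
  move=> /andP[t0 t1]; apply: posdef_det_neq0 => w w0.
  rewrite /B mulmxDr mulmxDl mul_mx_scalar -scalemxAr -!scalemxAl.
  have := mulmx_trmx_gt0 w0; have := Apos w w0.
  move: (w *m w^T) (w *m A *m w^T) => W2 WA; rewrite !mxE; nra.
pose p : {poly R} := \det (\matrix_(i, j)
  ((i == j)%:R%:P + 'X * (A i j - (i == j)%:R)%:P)).
have pE t : p.[t] = \det (B t).
  rewrite -horner_evalE -det_map_mx; congr (\det _); apply/matrixP => i j.
  rewrite !mxE /= horner_evalE !hornerE.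
  by case: eqP => _; rewrite ?mulr1n ?mulr0n; lra.
rewrite ltNge; apply/negP => detA_le0.
have [c c01 pc0] : exists2 c, c \in `[0, 1] & p.[c] = 0.
  apply: IVT => //.
    by apply: continuous_subspaceT => t; exact: continuous_horner.
  rewrite /= !pE /B subr0 scale0r addr0 det1 subrr scale1r.
  by rewrite raddf0 add0r ge_min detA_le0 le_max ler01 orbT.
by move: c01; rewrite in_itv /= => /Bdet; rewrite -pE pc0 eqxx.
Qed.

End posdef.

Lemma adj_invmx (R : comUnitRingType) n (A : 'M[R]_n) :
  A \in unitmx -> \adj A = \det A *: invmx A.
Proof.
by move=> Au; rewrite /invmx Au scalerA mulrV ?scale1r // -unitmxE.
Qed.

Lemma sum_sqr_mx (R : comRingType) p q (A : 'M[R]_(p, q)) :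
  \sum_j \sum_k A j k ^+ 2 = \tr (A *m A^T).
Proof.
by apply: eq_bigr => j _; rewrite mxE; apply: eq_bigr => k _; rewrite mxE expr2.
Qed.

Section frame.
Variables (R : comRingType) (n : nat) (E : 'I_n -> 'rV[R]_n).

Definition frame_mx : 'M[R]_n := \matrix_(i, j) E i 0 j.

Lemma frame_mx_conjE (A : 'M[R]_n) i j :
  (frame_mx *m A *m frame_mx^T) i j = (E i *m A *m (E j)^T) 0 0.
Proof.
rewrite !mxE; apply: eq_bigr => l _; rewrite !mxE; congr (_ * _).
by apply: eq_bigr => k _; rewrite !mxE.
Qed.

Lemma frame_gramE a b : (frame_mx^T *m frame_mx) a b = \sum_i E i 0 a * E i 0 b.
Proof. by rewrite mxE; apply: eq_bigr => i _; rewrite !mxE. Qed.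

Lemma sum_frame_quad (A : 'M[R]_n) :
  \sum_i (E i *m A *m (E i)^T) 0 0 = \tr (A *m (frame_mx^T *m frame_mx)).
Proof.
rewrite mxtrace_mulC -mulmxA mxtrace_mulC.
by apply: eq_bigr => i _; rewrite frame_mx_conjE.
Qed.

End frame.

Section statistical_structure.
Variables (R : realType) (n : nat) (U : set 'rV[R]_n)
  (G : 'I_n -> 'I_n -> 'rV[R]_n -> R)
  (Gam : 'I_n -> 'I_n -> 'I_n -> 'rV[R]_n -> R).
Hypotheses (U_open : open U) (reg : regular U G Gam)
  (stat : statistical_structure U G Gam) (tfree : trace_free U G Gam).

Local Notation g := (metric_at G).

Definition christoffel_mx a x : 'M[R]_n := \matrix_(k, b) Gam k a b x.
Definition nablag_mx a x : 'M[R]_n := \matrix_(b, c) nablag G Gam a b c x.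
Definition nabla2g_mx m a x : 'M[R]_n := \matrix_(b, c) nabla2g G Gam m a b c x.

Lemma metric_det_gt0 x : U x -> 0 < \det (g x).
Proof. by case: stat => _ Gpos _ _ Ux; apply: posdef_det_gt0; exact: Gpos. Qed.

Lemma metric_unitmx x : U x -> g x \in unitmx.
Proof. by move=> Ux; rewrite unitmxE unitfE gt_eqF // metric_det_gt0. Qed.

Lemma metric_derivable x a : U x -> derivable g x (ebasis R a).
Proof.
case: reg => dG _ _ Ux; apply/derivable_mxP => i j.
by under eq_fun do rewrite mxE; exact: dG.
Qed.

Lemma derive_metric x a : U x -> 'D_(ebasis R a) g x = \matrix_(b, c) pd (G b c) a x.
Proof.
move=> Ux; rewrite derive_mx; last exact: metric_derivable.
by apply/matrixP => i j; rewrite !mxE; under eq_fun do rewrite mxE.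
Qed.

Lemma nablag_mxE x a : U x -> nablag_mx a x =
  'D_(ebasis R a) g x - (christoffel_mx a x)^T *m g x - g x *m christoffel_mx a x.
Proof.
move=> Ux; rewrite derive_metric //; apply/matrixP => b c.
by rewrite !mxE /nablag; congr (_ - _ - _); apply: eq_bigr => k _; rewrite !mxE // mulrC.
Qed.

Lemma nablag_mx_sym x a : U x -> (nablag_mx a x)^T = nablag_mx a x.
Proof.
case: stat => Gsym _ _ _ Ux; apply/matrixP => b c; rewrite !mxE /nablag.
have -> : pd (G c b) a x = pd (G b c) a x.
  by apply: near_eq_derive; apply: filterS (U_open Ux) => y Uy; rewrite Gsym.
by rewrite addrAC; congr (_ - _ - _); apply: eq_bigr => k _; rewrite Gsym.
Qed.

Lemma nablag_mx_derivable x m a : U x -> derivable (nablag_mx a) x (ebasis R m).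
Proof.
case: reg => dG dpG dGam Ux; apply/derivable_mxP => b c.
under eq_fun do rewrite mxE.
apply: derivableB; first apply: derivableB; first exact: dpG.
- by apply: derivable_big_sum => k _; apply: derivableM; [exact: dGam | exact: dG].
- by apply: derivable_big_sum => k _; apply: derivableM; [exact: dGam | exact: dG].
Qed.

Lemma nabla2g_mxE x m a : U x -> nabla2g_mx m a x =
  'D_(ebasis R m) (nablag_mx a) x - \sum_k Gam k m a x *: nablag_mx k x
  - (christoffel_mx m x)^T *m nablag_mx a x - nablag_mx a x *m christoffel_mx m x.
Proof.
move=> Ux; rewrite derive_mx; last exact: nablag_mx_derivable.
apply/matrixP => b c; rewrite !mxE.
have -> : (fun y : 'rV[R]_n => nablag_mx a y b c) = nablag G Gam a b c.
  by apply/funext => y; rewrite mxE.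
rewrite /nabla2g summxE; congr (_ - _ - _ - _).
- by apply: eq_bigr => k _; rewrite !mxE.
- by apply: eq_bigr => k _; rewrite !mxE.
- by apply: eq_bigr => k _; rewrite !mxE mulrC.
Qed.

Lemma trace_free_derive_det x a : U x ->
  'D_(ebasis R a) (fun y => \det (g y)) x = 2 * \det (g x) * \tr (christoffel_mx a x).
Proof.
move=> Ux; have d0 := metric_det_gt0 Ux.
have ddet : derivable (fun y => \det (g y)) x (ebasis R a).
  by case: (is_derive_det (derivableP (metric_derivable (a := a) Ux))).
have := tfree Ux a; rewrite /nabla_vol /pd /volc.
rewrite (@derive_sqrt_comp _ _ (fun y => \det (g y))) //.
have -> : \sum_i Gam i a i x = \tr (christoffel_mx a x).
  by apply: eq_bigr => i _; rewrite mxE.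
set D := 'D_ _ _ _; set d := \det (g x) in d0 *; set s := Num.sqrt d => vol0.
have s_gt0 : 0 < s by rewrite sqrtr_gt0.
have ss : s * s = d by rewrite -expr2 sqr_sqrtr // ltW.
have -> : D = D / (2 * s) * (2 * s) by rewrite divfK // mulf_neq0 // gt_eqF.
by move/eqP: vol0; rewrite subr_eq0 => /eqP ->; rewrite -ss; ring.
Qed.

Lemma trace_free_nablag_adj x a : U x -> \tr (nablag_mx a x *m \adj (g x)) = 0.
Proof.
move=> Ux.
have Ddet : \tr (\adj (g x) *m 'D_(ebasis R a) g x)
    = 2 * \det (g x) * \tr (christoffel_mx a x).
  have [_ <-] := is_derive_det (derivableP (metric_derivable (a := a) Ux)).
  exact: trace_free_derive_det.
rewrite nablag_mxE // !mulmxBl !raddfB /= mxtrace_mulC Ddet.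
rewrite -mulmxA mul_mx_adj mul_mx_scalar mxtraceZ mxtrace_tr.
rewrite mxtrace_mulC mulmxA mul_adj_mx mul_scalar_mx mxtraceZ.
ring.
Qed.

Lemma trace_nablag x a : U x -> \tr (nablag_mx a x *m invmx (g x)) = 0.
Proof.
move=> Ux; have := trace_free_nablag_adj a Ux.
rewrite adj_invmx ?metric_unitmx // -scalemxAr mxtraceZ => /eqP.
by rewrite mulf_eq0 gt_eqF ?metric_det_gt0 //= => /eqP.
Qed.

Lemma trace_derive_nablag x m a : U x ->
  \tr ('D_(ebasis R m) (nablag_mx a) x *m invmx (g x))
  = \tr (nablag_mx a x *m invmx (g x) *m 'D_(ebasis R m) g x *m invmx (g x)).
Proof.
move=> Ux; have gu := metric_unitmx Ux.
have dg := metric_derivable (a := m) Ux.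
set P := invmx (g x); set Dg := 'D_ _ g x; set d := \det (g x).
set Dadj := 'D_(ebasis R m) (fun y => \adj (g y)) x.
have adjE : \adj (g x) = d *: P by exact: adj_invmx.
have DadjE : Dadj = \tr (\adj (g x) *m Dg) *: P - d *: (P *m Dg *m P).
  rewrite -[Dadj]mulmx1 -(mulmxV gu) mulmxA.
  rewrite (_ : Dadj *m g x = (\tr (\adj (g x) *m Dg))%:M - \adj (g x) *m Dg).
    by rewrite mulmxBl mul_scalar_mx adjE -!scalemxAl.
  by rewrite -(derive_adj_mulmx dg) addrK.
(* tr (C_a adj g) vanishes on the open set U, hence so does its derivative. *)
have DF : \tr ('D_(ebasis R m) (nablag_mx a) x *m \adj (g x) + nablag_mx a x *m Dadj) = 0.
  have [_ <-] := is_derive_mxtrace (is_derive_mulmx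
    (derivableP (@nablag_mx_derivable x m a Ux)) (derivableP (derivable_adj dg))).
  rewrite -(derive_cst (0 : R) x (ebasis R m)).
  apply: near_eq_derive; apply: filterS (U_open Ux) => y Uy.
  exact: trace_free_nablag_adj.
move: DF; rewrite DadjE adjE mulmxBr mxtraceD linearB /= -!scalemxAr !mxtraceZ.
rewrite trace_nablag // mulr0 add0r -mulrBr => /eqP.
by rewrite mulf_eq0 gt_eqF ?metric_det_gt0 //= subr_eq0 !mulmxA => /eqP.
Qed.

Lemma trace_nabla2g x m a : U x ->
  \tr (nabla2g_mx m a x *m invmx (g x))
  = \tr (nablag_mx m x *m invmx (g x) *m nablag_mx a x *m invmx (g x)).
Proof.
move=> Ux; have gu := metric_unitmx Ux.
have DgE : 'D_(ebasis R m) g x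
    = nablag_mx m x + (christoffel_mx m x)^T *m g x + g x *m christoffel_mx m x.
  by rewrite nablag_mxE // -[_ - _ - _ + _]addrAC !subrK.
rewrite nabla2g_mxE // !mulmxBl linearB linearB linearB /= trace_derive_nablag // DgE.
set P := invmx (g x); set Gm := christoffel_mx m x; set Ca := nablag_mx a x.
have -> : \tr ((\sum_k Gam k m a x *: nablag_mx k x) *m P) = 0.
  rewrite mulmx_suml raddf_sum /= big1 // => k _.
  by rewrite -scalemxAl mxtraceZ trace_nablag // mulr0.
rewrite !mulmxDr !mulmxDl !mxtraceD -!mulmxA mulmxV // mulmx1 mulKmx //.
rewrite (mulmxA Ca P (_ *m P)) (mxtrace_mulC (Ca *m P)) -mulmxA.
rewrite (mulmxA Ca P Gm^T) (mxtrace_mulC (Ca *m P)).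
ring.
Qed.

Lemma nabla2g_evE x X Y Z W : nabla2g_ev G Gam x X Y Z W =
  \sum_m \sum_a X 0 m * Y 0 a * (Z *m nabla2g_mx m a x *m W^T) 0 0.
Proof.
apply: eq_bigr => m _; apply: eq_bigr => a _; rewrite exchange_big !mxE big_distrr.
apply: eq_bigr => c _; rewrite !mxE big_distrl big_distrr.
by apply: eq_bigr => b _; rewrite !mxE /=; ring.
Qed.

Lemma nablag_evE x X Y Z : nablag_ev G Gam x X Y Z =
  (Y *m (\sum_a X 0 a *: nablag_mx a x) *m Z^T) 0 0.
Proof.
rewrite /nablag_ev; under eq_bigr do rewrite exchange_big.
rewrite exchange_big; under eq_bigr do rewrite exchange_big.
rewrite mxE; apply: eq_bigr => c _; rewrite mxE big_distrl; apply: eq_bigr => b _.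
rewrite !mxE summxE big_distrr big_distrl.
by apply: eq_bigr => a _; rewrite !mxE /=; ring.
Qed.

Lemma frame_nabla2g x E : \sum_i \sum_j nabla2g_ev G Gam x (E i) (E i) (E j) (E j)
  = \sum_m \sum_a ((frame_mx E)^T *m frame_mx E) m a
      * \tr (nabla2g_mx m a x *m ((frame_mx E)^T *m frame_mx E)).
Proof.
under eq_bigr => i _ do under eq_bigr => j _ do rewrite nabla2g_evE.
under eq_bigr => i _ do rewrite exchange_big.
under eq_bigr => i _ do under eq_bigr => m _ do rewrite exchange_big.
under eq_bigr => i _ do under eq_bigr => m _ do under eq_bigr => a _
  do rewrite -big_distrr /= sum_frame_quad.
rewrite exchange_big; under eq_bigr => m _ do rewrite exchange_big.
by apply: eq_bigr => m _; apply: eq_bigr => a _; rewrite -big_distrl frame_gramE.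
Qed.

Lemma frame_nablag x E : (forall a, (nablag_mx a x)^T = nablag_mx a x) ->
  \sum_i \sum_j \sum_k nablag_ev G Gam x (E i) (E j) (E k) ^+ 2
  = \sum_m \sum_a ((frame_mx E)^T *m frame_mx E) m a
      * \tr (nablag_mx m x *m ((frame_mx E)^T *m frame_mx E) *m nablag_mx a x
             *m ((frame_mx E)^T *m frame_mx E)).
Proof.
move=> Csym; set F := frame_mx E; set P := F^T *m F.
pose Y i := \sum_a E i 0 a *: nablag_mx a x.
have Ysym i : (Y i)^T = Y i.
  by rewrite raddf_sum; apply: eq_bigr => a _; rewrite /= linearZ /= Csym.
have trY i : \tr (F *m Y i *m F^T *m (F *m Y i *m F^T)^T) = \tr (Y i *m P *m Y i *m P).
  by rewrite !trmx_mul trmxK Ysym -!mulmxA mxtrace_mulC !mulmxA.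
have trY_bilin i : \tr (Y i *m P *m Y i *m P)
    = \sum_m \sum_a E i 0 m * E i 0 a * \tr (nablag_mx m x *m P *m nablag_mx a x *m P).
  rewrite /Y !mulmx_suml raddf_sum /=; apply: eq_bigr => m _.
  rewrite -!scalemxAl mxtraceZ mulmx_sumr mulmx_suml raddf_sum /= mulr_sumr.
  by apply: eq_bigr => a _; rewrite -scalemxAr -scalemxAl mxtraceZ mulrA.
under eq_bigr => i _ do under eq_bigr => j _ do under eq_bigr => k _
  do rewrite nablag_evE -frame_mx_conjE.
under eq_bigr => i _ do rewrite sum_sqr_mx trY trY_bilin.
rewrite exchange_big; under eq_bigr => m _ do rewrite exchange_big.
by apply: eq_bigr => m _; apply: eq_bigr => a _; rewrite -big_distrl frame_gramE.
Qed.

Lemma orthonormal_frame_gram x E : orthonormal_frame G x E ->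
  (frame_mx E)^T *m frame_mx E = invmx (g x).
Proof.
move=> onE; set F := frame_mx E.
have FgF : F *m (g x *m F^T) = 1%:M.
  by apply/matrixP => i j; rewrite mulmxA frame_mx_conjE -/(gform G x _ _) onE mxE.
have gFF : g x *m (F^T *m F) = 1%:M by rewrite mulmxA; exact: mulmx1C.
by rewrite -[LHS](mulKmx (mulmx1_unit gFF).1) gFF mulmx1.
Qed.

End statistical_structure.

Theorem proposition11p2 (R : realType) (n : nat) (U : set 'rV[R]_n)
  (G : 'I_n -> 'I_n -> 'rV[R]_n -> R)
  (Gam : 'I_n -> 'I_n -> 'I_n -> 'rV[R]_n -> R)
  (p : 'rV[R]_n) (E : 'I_n -> 'rV[R]_n) :
  open U -> regular U G Gam -> statistical_structure U G Gam ->
  trace_free U G Gam -> U p -> orthonormal_frame G p E ->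
  \sum_i \sum_j nabla2g_ev G Gam p (E i) (E i) (E j) (E j)
  = \sum_i \sum_j \sum_k (nablag_ev G Gam p (E i) (E j) (E k)) ^+ 2.
Proof.
move=> U_open reg stat tfree Up onE.
rewrite frame_nabla2g frame_nablag => [|a]; last first.
  exact (nablag_mx_sym U_open stat a Up).
rewrite (orthonormal_frame_gram onE).
apply: eq_bigr => m _; apply: eq_bigr => a _.
by rewrite (trace_nabla2g U_open reg stat tfree m a Up).
Qed.
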